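(* Let $n\in\mathbb{N}$ and $a\in\mathbb{R}$ with $|a|>5$. Let $\tilde{E}_n(a,1)$ be the $(n+1)\times n$ matrix whose $(i,j)$ entry is $a$ if $i=j$, $1$ if $j=i+1$, $a$ if $i=j+1$, $1$ if $i=j+2$, and $0$ otherwise, and let $\tilde{B}_n(a,1)$ be the $(n+3)\times n$ matrix whose first row is $(1,0,\dots,0)$, whose rows $2,\dots,n+2$ are the rows of $\tilde{E}_n(a,1)$ in order, and whose last row is $(0,\dots,0,1)$. For $1\le i<j<k\le n+3$, let $\tilde{B}_n(a,1)^{i,j,k}$ be the $n\times n$ matrix obtained by deleting the $i$-th, $j$-th and $k$-th rows of $\tilde{B}_n(a,1)$. Then $|\tilde{B}_n(a,1)^{i,j,k}|\neq0$.
   Context: $|M|$ denotes the determinant of a square matrix $M$. *)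

From mathcomp Require Import all_boot all_order all_algebra.
From mathcomp Require Import reals.
Set Implicit Arguments. Unset Strict Implicit. Unset Printing Implicit Defensive.
Import Order.TTheory GRing.Theory Num.Theory.
Local Open Scope ring_scope.

(* Indices are 0-based: paper's row/column p corresponds to Rocq index p-1. *)

Definition Etilde (R : nzRingType) (n : nat) (a : R) : 'M[R]_(n.+1, n) :=
  \matrix_(i < n.+1, j < n)
    (if (i : nat) == j then a
     else if (j : nat) == i.+1 then 1
     else if (i : nat) == j.+1 then a
     else if (i : nat) == j.+2 then 1
     else 0).

Definition Btilde (R : nzRingType) (n : nat) (a : R) : 'M[R]_(n.+3, n) :=
  \matrix_(r < n.+3, c < n)
    (if (r : nat) == 0%N then ((c : nat) == 0%N)%:R
     else if (r : nat) == n.+2 then ((c : nat) == n.-1)%:R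
     else Etilde n a (inord (r.-1)) c).

Definition kept_rows (n i j k : nat) : seq nat :=
  [seq x <- iota 0 n.+3 | x \notin [:: i; j; k]].

Definition del3rows (R : Type) (n : nat) (M : 'M[R]_(n.+3, n))
    (i j k : 'I_n.+3) : 'M[R]_n :=
  \matrix_(r < n, c < n) M (inord (nth 0%N (kept_rows n i j k) r)) c.

From mathcomp Require Import all_boot all_order all_algebra.
From mathcomp Require Import reals.
From mathcomp Require Import ring lra zify.
Set Implicit Arguments. Unset Strict Implicit. Unset Printing Implicit Defensive.
Import Order.TTheory GRing.Theory Num.Theory.
Local Open Scope ring_scope.

(** Column c of B̃_n(a,1) is the coefficient vector of X^c p, where
    p = 1 + aX + aX^2 + X^3 = (1 + X)(X^2 + (a - 1)X + 1).  A vector v in the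
    kernel of the transposed minor thus gives a polynomial q = sum_c v_c X^c
    with q p = A X^i + B X^j + C X^k.  As p is palindromic and |a| > 5, it
    vanishes at -1, at some r with |r| < 2/5 and at 1/r.  Dividing the
    equations at r and 1/r by their extreme powers gives
    |A| <= |r| |B| + |r|^2 |C| and |C| <= |r| |B| + |r|^2 |A|, while the
    equation at -1 gives |B| <= |A| + |C|; for small |r| this forces
    A = B = C = 0, hence q p = 0, q = 0 and v = 0. *)

Lemma size_filter_notin (T : eqType) (s t : seq T) :
  uniq s -> uniq t -> {subset t <= s} ->
  size [seq x <- s | x \notin t] = (size s - size t)%N.
Proof.
move=> s_uniq t_uniq ts.
have /perm_size t_size : perm_eq [seq x <- s | x \in t] t.
  apply: uniq_perm => [||x]; rewrite ?filter_uniq // mem_filter.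
  by apply/andP/idP => [[] // | xt]; split => //; apply: ts.
by rewrite -(count_predC (mem t) s) -size_filter t_size size_filter addKn.
Qed.

Lemma coef_rVpolyM (R : nzRingType) n (v : 'rV[R]_n) (p : {poly R}) s :
  (rVpoly v * p)`_s = \sum_(c < n) v 0 c * ('X^c * p)`_s.
Proof.
rewrite {1}(row_sum_delta v) linear_sum mulr_suml coef_sum.
apply: eq_bigr => c _.
by rewrite linearZ /= (@rVpoly_delta R n c) -scalerAl coefZ.
Qed.

Lemma poly_supp3E (R : nzRingType) (p : {poly R}) (i j k : nat) :
  (i < j)%N -> (j < k)%N -> (forall s, s \notin [:: i; j; k] -> p`_s = 0) ->
  p = p`_i *: 'X^i + p`_j *: 'X^j + p`_k *: 'X^k.
Proof.
move=> hij hjk p_supp; apply/polyP => s; rewrite !coefD !coefZ !coefXn.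
have [-> | si] := eqVneq s i.
  by rewrite ltn_eqF // ltn_eqF ?(ltn_trans hij) // mulr1 !mulr0 !addr0.
have [-> | sj] := eqVneq s j.
  by rewrite ltn_eqF // mulr1 !mulr0 add0r addr0.
have [-> | sk] := eqVneq s k; first by rewrite mulr1 !mulr0 !add0r.
by rewrite !mulr0 !addr0 p_supp // !inE negb_or si negb_or sj sk.
Qed.

Lemma trinomial_head_bound (R : realFieldType) (x y z r : R) (m l : nat) :
  (0 < m)%N -> (m < l)%N -> `|r| <= 1 -> x + y * r ^+ m + z * r ^+ l = 0 ->
  `|x| <= `|r| * `|y| + `|r| ^+ 2 * `|z|.
Proof.
move=> m_gt0 ml r_le1 eq0; have r_ge0 := normr_ge0 r.
have -> : x = - (y * r ^+ m + z * r ^+ l) by lra.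
have rm : `|r| ^+ m <= `|r| by rewrite -[leRHS]expr1 ler_wiXn2l.
have rl : `|r| ^+ l <= `|r| ^+ 2 by rewrite ler_wiXn2l //; lia.
rewrite normrN (le_trans (ler_normD _ _)) // !normrM !normrX.
by have := normr_ge0 y; have := normr_ge0 z; nra.
Qed.

Lemma trinomial_eq0 (R : realFieldType) (r A B C : R) (i j k : nat) :
  (i < j)%N -> (j < k)%N -> r != 0 -> `|r| < 2 / 5 ->
  A * r ^+ i + B * r ^+ j + C * r ^+ k = 0 ->
  A * r ^- i + B * r ^- j + C * r ^- k = 0 ->
  A * (-1) ^+ i + B * (-1) ^+ j + C * (-1) ^+ k = 0 ->
  [/\ A = 0, B = 0 & C = 0].
Proof.
move=> hij hjk r0 r_small at_r at_rV at_N1.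
have le_ij := ltnW hij; have le_jk := ltnW hjk.
have le_ik := leq_trans le_ij le_jk.
have expB m l : (m <= l)%N -> r ^+ l * r ^- m = r ^+ (l - m).
  move=> ml; rewrite -{1}(subnKC ml) exprD mulrC mulrA mulVf ?mul1r //.
  exact: expf_neq0.
have head_i : A + B * r ^+ (j - i) + C * r ^+ (k - i) = 0.
  have := congr1 ( *%R^~ (r ^- i)) at_r.
  by rewrite mul0r !mulrDl -!mulrA !expB // subnn expr0 mulr1.
have head_k : C + B * r ^+ (k - j) + A * r ^+ (k - i) = 0.
  have := congr1 ( *%R (r ^+ k)) at_rV.
  by rewrite mulr0 !mulrDr !(mulrCA (r ^+ k)) !expB // subnn expr0 mulr1; lra.
have r_le1 : `|r| <= 1 by lra.
have bound_A : `|A| <= `|r| * `|B| + `|r| ^+ 2 * `|C|.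
  by apply: (trinomial_head_bound _ _ r_le1 head_i); lia.
have bound_C : `|C| <= `|r| * `|B| + `|r| ^+ 2 * `|A|.
  by apply: (trinomial_head_bound _ _ r_le1 head_k); lia.
have bound_B : `|B| <= `|A| + `|C|.
  have : `|B * (-1) ^+ j| = `|- (A * (-1) ^+ i + C * (-1) ^+ k)|.
    by congr `|_|; lra.
  rewrite normrN normrM normrX normrN1 expr1n mulr1 => ->.
  rewrite (le_trans (ler_normD _ _)) //.
  by rewrite !normrM !normrX normrN1 !expr1n !mulr1.
have r_ge0 := normr_ge0 r.
have rB : `|r| * `|B| <= `|r| * (`|A| + `|C|) by rewrite ler_wpM2l.
have r2 : `|r| ^+ 2 <= 2 / 5 * `|r| by rewrite expr2 ler_wpM2r // ltW.
have AC_le0 : (1 - 2 * `|r| - `|r| ^+ 2) * (`|A| + `|C|) <= 0 by lra.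
rewrite pmulr_rle0 in AC_le0; last lra.
have A_ge0 := normr_ge0 A; have B_ge0 := normr_ge0 B; have C_ge0 := normr_ge0 C.
by split; apply/normr0_eq0; lra.
Qed.

Lemma poly_supp3_eq0 (R : realFieldType) (p : {poly R}) (i j k : nat) (r : R) :
  (i < j)%N -> (j < k)%N -> r != 0 -> `|r| < 2 / 5 ->
  (forall s, s \notin [:: i; j; k] -> p`_s = 0) ->
  root p r -> root p r^-1 -> root p (-1) -> p = 0.
Proof.
move=> hij hjk r0 r_small p_supp; rewrite (poly_supp3E hij hjk p_supp).
move=> /rootP + /rootP + /rootP; rewrite !hornerE !exprVn => at_r at_rV at_N1.
have [-> -> ->] := trinomial_eq0 hij hjk r0 r_small at_r at_rV at_N1.
by rewrite !scale0r !addr0.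
Qed.

Lemma quadratic_small_root (R : rcfType) (b : R) :
  4 < `|b| -> exists2 r : R, `|r| < 2 / 5 & r ^+ 2 + b * r + 1 = 0.
Proof.
wlog b_ge0 : b / 0 <= b.
  move=> wlog_b; have [b0 | b0] := lerP 0 b; first exact: wlog_b.
  have nb_ge0 : 0 <= - b by rewrite oppr_ge0 ltW.
  rewrite -normrN => hb; have [r r_small r_root] := wlog_b (- b) nb_ge0 hb.
  by exists (- r); rewrite ?normrN // sqrrN mulrN -mulNr.
rewrite ger0_norm // => b_gt4.
set D := Num.sqrt (b ^+ 2 - 4).
have D_sqr : D ^+ 2 = b ^+ 2 - 4 by rewrite sqr_sqrtr //; nra.
have D_ge0 : 0 <= D := sqrtr_ge0 _.
exists ((D - b) / 2).
  rewrite ltr0_norm; nra.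
have -> : ((D - b) / 2) ^+ 2 + b * ((D - b) / 2) + 1 = (D ^+ 2 - b ^+ 2 + 4) / 4.
  by field.
by rewrite D_sqr; lra.
Qed.

Definition band_poly (R : nzRingType) (a : R) : {poly R} := Poly [:: 1; a; a; 1].

Lemma coef_band_poly (R : nzRingType) (a : R) m :
  (band_poly a)`_m =
  if m == 0%N then 1 else if m == 1%N then a else if m == 2%N then a
  else if m == 3%N then 1 else 0.
Proof. by rewrite coef_Poly; case: m => [|[|[|[|m]]]] //=; rewrite nth_nil. Qed.

Lemma horner_band_poly (R : comNzRingType) (a x : R) :
  (band_poly a).[x] = 1 + a * x + a * x ^+ 2 + x ^+ 3.
Proof. by rewrite horner_Poly /=; ring. Qed.

Lemma band_poly_neq0 (R : nzRingType) (a : R) : band_poly a != 0.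
Proof.
apply/eqP => /(congr1 (fun p : {poly R} => p`_0)).
by rewrite coef_band_poly coef0; apply/eqP/oner_neq0.
Qed.

Lemma band_poly_rootN1 (R : comNzRingType) (a : R) : root (band_poly a) (-1).
Proof. by rewrite /root horner_band_poly; apply/eqP; ring. Qed.

Lemma band_poly_root_neq0 (R : comNzRingType) (a x : R) :
  root (band_poly a) x -> x != 0.
Proof.
apply: contraTneq => ->; rewrite /root horner_band_poly.
by rewrite !expr0n mulr0 !addr0 oner_eq0.
Qed.

Lemma band_poly_rootV (R : fieldType) (a x : R) :
  root (band_poly a) x -> root (band_poly a) x^-1.
Proof.
move=> x_root; have x0 := band_poly_root_neq0 x_root.
move/rootP: x_root; rewrite /root !horner_band_poly => x_root.
have -> : 1 + a * x^-1 + a * x^-1 ^+ 2 + x^-1 ^+ 3 =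
          x^-1 ^+ 3 * (1 + a * x + a * x ^+ 2 + x ^+ 3) by field.
by rewrite x_root mulr0.
Qed.

Lemma band_poly_small_root (R : rcfType) (a : R) :
  5 < `|a| -> exists2 r : R, `|r| < 2 / 5 & root (band_poly a) r.
Proof.
move=> a_large; have : 4 < `|a - 1|.
  by have := ler_normD (a - 1) 1; rewrite subrK normr1; lra.
case/quadratic_small_root => r r_small r_root; exists r => //.
rewrite /root horner_band_poly.
have -> : 1 + a * r + a * r ^+ 2 + r ^+ 3 = (1 + r) * (r ^+ 2 + (a - 1) * r + 1).
  by ring.
by rewrite r_root mulr0.
Qed.

Lemma Btilde_coef (R : nzRingType) n (a : R) (s : 'I_n.+3) (c : 'I_n) :
  Btilde n a s c = ('X^c * band_poly a)`_s.
Proof.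
have hs := ltn_ord s; have hc := ltn_ord c.
rewrite coefXnM coef_band_poly /Btilde mxE.
case: eqP => [s0 | s_gt0]; last case: eqP => [sN | s_ltN]; last first.
  rewrite /Etilde mxE inordK; last lia.
all: repeat first [case: eqP => ? | case: ltnP => ?].
all: by rewrite ?mulr1n ?mulr0n //; exfalso; lia.
Qed.

Lemma mem_kept_rows n i j k s :
  (s \in kept_rows n i j k) = (s < n.+3)%N && (s \notin [:: i; j; k]).
Proof. by rewrite mem_filter mem_iota andbC. Qed.

Lemma size_kept_rows n (i j k : 'I_n.+3) :
  (i < j)%N -> (j < k)%N -> size (kept_rows n i j k) = n.
Proof.
move=> hij hjk; rewrite size_filter_notin ?size_iota ?iota_uniq //.
- by rewrite subSS subSS subn1.
- by rewrite /= !inE; apply/and3P; split => //; apply/negP; rewrite ?negb_or; lia.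
- by move=> x; rewrite mem_iota !inE => /or3P [] /eqP ->; rewrite ltn_ord.
Qed.

Lemma del3rows_Btilde_kernel (R : fieldType) n (a : R) (i j k : 'I_n.+3)
    (v : 'rV[R]_n) :
  (i < j)%N -> (j < k)%N -> v *m (del3rows (Btilde n a) i j k)^T = 0 ->
  forall s, s \notin [:: (i : nat); (j : nat); (k : nat)] ->
  (rVpoly v * band_poly a)`_s = 0.
Proof.
move=> hij hjk hv s hs; have [s_small | s_large] := ltnP s n.+3.
  have s_kept : s \in kept_rows n i j k by rewrite mem_kept_rows s_small.
  have s_idx : (index s (kept_rows n i j k) < n)%N.
    by rewrite -[X in (_ < X)%N](size_kept_rows hij hjk) index_mem.
  move/rowP/(_ (Ordinal s_idx)): hv; rewrite !mxE => kernel_eq.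
  rewrite coef_rVpolyM -[RHS]kernel_eq; apply: eq_bigr => c _.
  by rewrite 2!mxE nth_index // Btilde_coef inordK.
have size_q : (size (rVpoly v) <= n)%N by apply: size_poly.
have size_p : (size (band_poly a) <= 4)%N by apply: size_Poly.
apply: nth_default; apply: leq_trans (size_polyMleq _ _) _.
by rewrite -subn1 leq_subLR (leq_trans (leq_add size_q size_p)) //; lia.
Qed.

Theorem proposition5p2 (R : realType) (n : nat) (a : R) (ha : 5 < `|a|)
    (i j k : 'I_n.+3) (hij : (i < j)%N) (hjk : (j < k)%N) :
  \det (del3rows (Btilde n a) i j k) != 0.
Proof.
apply/negP; rewrite -det_tr => /det0P [v v_neq0 v_kernel].
have [r r_small r_root] := band_poly_small_root ha.
have vp0 : rVpoly v * band_poly a = 0.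
  apply: (poly_supp3_eq0 hij hjk (band_poly_root_neq0 r_root) r_small).
  - exact: del3rows_Btilde_kernel v_kernel.
  - by rewrite rootM r_root orbT.
  - by rewrite rootM band_poly_rootV ?orbT.
  - by rewrite rootM band_poly_rootN1 orbT.
move/eqP: vp0; rewrite mulf_eq0 (negbTE (band_poly_neq0 a)) orbF => /eqP v0.
by move/eqP: v_neq0; apply; rewrite -[v]rVpolyK v0 linear0.
Qed.
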